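(* Let $(X,(\cdot,\cdot|\cdot))$ be a 2-inner product space over $\mathbb{K}\in\{\mathbb{R},\mathbb{C}\}$, let $n$ be a positive integer, and let $x,y_1,\dots,y_n,z\in X$. Then \[ \sum_{i=1}^{n}\left|(x,y_i|z)\right|^2\le \|x|z\|^2\left\{\max_{1\le i\le n}\|y_i|z\|^2+\Big(\sum_{1\le i\ne j\le n}\left|(y_i,y_j|z)\right|^2\Big)^{1/2}\right\}. \]
   Context: A 2-inner product on a linear space $X$ of dimension greater than $1$ over $\mathbb{K}$ ($\mathbb{K}=\mathbb{R}$ or $\mathbb{C}$) is a function $(\cdot,\cdot|\cdot):X\times X\times X\to\mathbb{K}$ such that for all $x,x',y,z\in X$ and $\alpha\in\mathbb{K}$: (i) $(x,x|z)\ge 0$, and $(x,x|z)=0$ iff $x$ and $z$ are linearly dependent; (ii) $(x,x|z)=(z,z|x)$; (iii) $(y,x|z)=\overline{(x,y|z)}$; (iv) $(\alpha x,y|z)=\alpha(x,y|z)$; (v) $(x+x',y|z)=(x,y|z)+(x',y|z)$. The associated 2-norm is $\|x|z\|=\sqrt{(x,x|z)}$. The sum $\sum_{1\le i\ne j\le n}$ runs over all ordered pairs $(i,j)$ with $i,j\in\{1,\dots,n\}$, $i\ne j$. *)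

From mathcomp Require Import all_boot all_algebra.
From mathcomp Require Import reals.
From mathcomp Require Export complex.
Set Implicit Arguments. Unset Strict Implicit. Unset Printing Implicit Defensive.
Import GRing.Theory Num.Theory.
Local Open Scope ring_scope.

Definition lin_dep (K : nzRingType) (X : lmodType K) (x z : X) : Prop :=
  exists a b : K, (a != 0 \/ b != 0) /\ a *: x + b *: z = 0.

Definition is_2inner_product (K : numDomainType) (cj : K -> K)
    (X : lmodType K) (ip : X -> X -> X -> K) : Prop :=
  (exists u v : X, ~ lin_dep u v) /\
  [/\ (forall x z : X, 0 <= ip x x z /\ (ip x x z = 0 <-> lin_dep x z)),
      (forall x z : X, ip x x z = ip z z x),
      (forall x y z : X, ip y x z = cj (ip x y z)),
      (forall (a : K) (x y z : X), ip (a *: x) y z = a * ip x y z)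
    & (forall x x' y z : X, ip (x + x') y z = ip x y z + ip x' y z)].

Definition two_norm (K : numDomainType) (sqrtK : K -> K) (X : lmodType K)
    (ip : X -> X -> X -> K) (x z : X) : K := sqrtK (ip x x z).

Definition bessel_type_ineq (K : numDomainType) (sqrtK : K -> K)
    (X : lmodType K) (ip : X -> X -> X -> K) (n : nat)
    (x : X) (y : 'I_n -> X) (z : X) : Prop :=
  \sum_(i < n) `|ip x (y i) z| ^+ 2
  <= two_norm sqrtK ip x z ^+ 2 *
     (\big[Num.max/0]_(i < n) (two_norm sqrtK ip (y i) z ^+ 2)
      + sqrtK (\sum_(i < n) \sum_(j < n | i != j) `|ip (y i) (y j) z| ^+ 2)).

From mathcomp Require Import all_boot all_order all_algebra.
From mathcomp Require Import reals complex ring.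

(* Put c_i = (x,y_i|z), S = sum_i |c_i|^2 and w = sum_i c_i y_i, so that (x,w|z) = S.
   Expanding (w,w|z) = sum_(i,j) c_i conj(c_j) (y_i,y_j|z), the diagonal terms are bounded
   by S max_i ||y_i|z||^2 and, by the Cauchy-Schwarz inequality for finite sums, the
   off-diagonal ones by S (sum_(i<>j) |(y_i,y_j|z)|^2)^(1/2).  The Cauchy-Schwarz
   inequality for the 2-inner product, S^2 = |(x,w|z)|^2 <= ||x|z||^2 (w,w|z), then
   yields the claim after division by S. *)

Set Implicit Arguments.
Unset Strict Implicit.
Unset Printing Implicit Defensive.

Import Order.TTheory GRing.Theory Num.Theory.
Local Open Scope ring_scope.

Lemma quadratic_discriminant_le (K : numFieldType) (p r s : K) :
  0 <= r -> 0 <= s -> (forall t, 0 <= t -> 2 * t * s <= p + t ^+ 2 * r) ->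
  s ^+ 2 <= p * r.
Proof.
move=> r_ge0 s_ge0 quad_ge0.
have p_ge0 : 0 <= p.
  by have := quad_ge0 0 (lexx 0); rewrite mulr0 mul0r expr0n mul0r addr0.
have [r0|r_neq0] := eqVneq r 0.
  rewrite r0 in quad_ge0 *.
  have [->|s_neq0] := eqVneq s 0; first by rewrite expr0n mulr0.
  have s_gt0 : 0 < s by rewrite lt_def s_neq0.
  have t_ge0 : 0 <= (p + 1) / (2 * s) by rewrite divr_ge0 ?addr_ge0 ?mulr_ge0 // ltW.
  have := quad_ge0 _ t_ge0; rewrite mulr0 addr0.
  have -> : 2 * ((p + 1) / (2 * s)) * s = p + 1 by field; rewrite gt_eqF.
  by rewrite gerDl ler10.
have r_gt0 : 0 < r by rewrite lt_def r_neq0.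
have := quad_ge0 (s / r) (divr_ge0 s_ge0 r_ge0).
have -> : 2 * (s / r) * s = s ^+ 2 / r + s ^+ 2 / r by field; rewrite gt_eqF.
have -> : (s / r) ^+ 2 * r = s ^+ 2 / r by field; rewrite gt_eqF.
by rewrite lerD2r ler_pdivrMr.
Qed.

Lemma CauchySchwarz_sum (K : numFieldType) (I : finType) (P : pred I) (a b : I -> K) :
  (forall i, 0 <= a i) -> (forall i, 0 <= b i) ->
  (\sum_(i | P i) a i * b i) ^+ 2
    <= (\sum_(i | P i) a i ^+ 2) * \sum_(i | P i) b i ^+ 2.
Proof.
move=> a_ge0 b_ge0; apply: quadratic_discriminant_le => [||t t_ge0].
- by apply: sumr_ge0 => i _; apply: exprn_ge0.
- by apply: sumr_ge0 => i _; apply: mulr_ge0.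
- rewrite -subr_ge0.
  have -> : \sum_(i | P i) a i ^+ 2 + t ^+ 2 * \sum_(i | P i) b i ^+ 2
      - 2 * t * \sum_(i | P i) a i * b i = \sum_(i | P i) (a i - t * b i) ^+ 2.
    rewrite !mulr_sumr -big_split -sumrB /=; apply: eq_bigr => i _; ring.
  apply: sumr_ge0 => i _; apply: real_exprn_even_ge0 => //.
  by rewrite rpredB ?ger0_real ?mulr_ge0.
Qed.

Lemma bigmax_nneg_ge0 (K : numDomainType) (I : Type) (r : seq I) (F : I -> K) :
  (forall j, 0 <= F j) -> 0 <= \big[Num.max/0]_(j <- r) F j.
Proof.
move=> F_ge0; apply: (big_ind (fun x => 0 <= x)) => // u v u_ge0 v_ge0.
by rewrite comparable_le_max ?u_ge0 // real_comparable ?ger0_real.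
Qed.

Lemma le_bigmax_nneg (K : numDomainType) (I : eqType) (r : seq I) (F : I -> K) i :
  (forall j, 0 <= F j) -> i \in r -> F i <= \big[Num.max/0]_(j <- r) F j.
Proof.
move=> F_ge0; elim: r => // j r IHr; rewrite in_cons big_cons.
have max_ge0 := bigmax_nneg_ge0 r F_ge0.
rewrite comparable_le_max ?real_comparable ?ger0_real //.
by case/orP => [/eqP->|/IHr->]; rewrite ?lexx ?orbT.
Qed.

Lemma ler_quadratic_form (K : numFieldType) (I : finType) (a : I -> K)
    (G : I -> I -> K) (m q : K) :
  (forall i, 0 <= a i) -> (forall i j, 0 <= G i j) -> (forall i, G i i <= m) ->
  0 <= q -> q ^+ 2 = \sum_i \sum_(j | i != j) G i j ^+ 2 ->
  \sum_i \sum_j a i * a j * G i j <= (\sum_i a i ^+ 2) * (m + q).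
Proof.
move=> a_ge0 G_ge0 le_diag q_ge0 q_sqr.
set A := \sum_i a i ^+ 2.
have A_ge0 : 0 <= A by apply: sumr_ge0 => i _; apply: exprn_ge0.
set O := \sum_i \sum_(j | i != j) a i * a j * G i j.
have -> : \sum_i \sum_j a i * a j * G i j = \sum_i a i ^+ 2 * G i i + O.
  rewrite -big_split /=; apply: eq_bigr => i _; rewrite (bigD1 i) //= -expr2.
  by congr (_ + _); apply: eq_bigl => j; rewrite eq_sym.
rewrite mulrDr; apply: lerD.
  by rewrite /A mulr_suml; apply: ler_sum => i _; rewrite ler_wpM2l ?exprn_ge0.
have O_ge0 : 0 <= O by do 2![apply: sumr_ge0 => ? _]; rewrite !mulr_ge0.
rewrite -ler_sqr ?nnegrE ?mulr_ge0 // exprMn q_sqr /O !pair_big_dep.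
apply: le_trans
  (@CauchySchwarz_sum _ _ _ (fun p => a p.1 * a p.2) (fun p => G p.1 p.2) _ _) _.
- by move=> p; rewrite mulr_ge0.
- by move=> p; apply: G_ge0.
apply: ler_wpM2r; first by apply: sumr_ge0 => p _; apply: exprn_ge0.
rewrite /A expr2 big_distrlr pair_big /= [X in X <= _]big_mkcond.
apply: ler_sum => p _; rewrite -exprMn.
case: ifP => _ //; apply: exprn_ge0; exact: mulr_ge0.
Qed.

Section TwoInnerProduct.

Variables (K : numFieldType) (cj : {rmorphism K -> K}).
Hypothesis mul_conj : forall a, a * cj a = `|a| ^+ 2.

Lemma conj_nneg a : 0 <= a -> cj a = a.
Proof.
move=> a_ge0; have [->|a_neq0] := eqVneq a 0; first exact: rmorph0.
by apply: (mulfI a_neq0); rewrite mul_conj ger0_norm.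
Qed.

Lemma norm_conj a : `|cj a| = `|a|.
Proof.
have [->|a_neq0] := eqVneq a 0; first by rewrite rmorph0.
have norm_neq0 : `|a| != 0 by rewrite normr_eq0.
by apply: (mulfI norm_neq0); rewrite -normrM mul_conj normrX normr_id.
Qed.

Variables (X : lmodType K) (ip : X -> X -> X -> K).
Hypothesis ip2 : is_2inner_product cj ip.
Variable z : X.

Lemma ip_ge0 u : 0 <= ip u u z.
Proof. by case: ip2 => _ [ge0 _ _ _ _]; case: (ge0 u z). Qed.

Lemma ip_conj u v : ip v u z = cj (ip u v z).
Proof. by case: ip2 => _ [_ _ conj _ _]. Qed.

Lemma ipZl a u v : ip (a *: u) v z = a * ip u v z.
Proof. by case: ip2 => _ [_ _ _ Z _]. Qed.

Lemma ipDl u u' v : ip (u + u') v z = ip u v z + ip u' v z.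
Proof. by case: ip2 => _ [_ _ _ _ D]. Qed.

Lemma ip0l v : ip 0 v z = 0.
Proof. by rewrite -(scale0r 0) ipZl mul0r. Qed.

Lemma ipZr a u v : ip u (a *: v) z = cj a * ip u v z.
Proof. by rewrite ip_conj ipZl rmorphM -ip_conj. Qed.

Lemma ipDr u v v' : ip u (v + v') z = ip u v z + ip u v' z.
Proof. by rewrite ip_conj ipDl rmorphD -!ip_conj. Qed.

Lemma ip0r u : ip u 0 z = 0.
Proof. by rewrite ip_conj ip0l rmorph0. Qed.

Lemma ip_suml (I : Type) (r : seq I) (P : pred I) (F : I -> X) v :
  ip (\sum_(i <- r | P i) F i) v z = \sum_(i <- r | P i) ip (F i) v z.
Proof. exact: (big_morph (fun u => ip u v z) (fun u u' => ipDl u u' v) (ip0l v)). Qed.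

Lemma ip_sumr (I : Type) (r : seq I) (P : pred I) (F : I -> X) u :
  ip u (\sum_(i <- r | P i) F i) z = \sum_(i <- r | P i) ip u (F i) z.
Proof. exact: (big_morph (fun v => ip u v z) (ipDr u) (ip0r u)). Qed.

Lemma ip_CauchySchwarz u v : `|ip u v z| ^+ 2 <= ip u u z * ip v v z.
Proof.
set c := ip u v z.
have [->|c_neq0] := eqVneq c 0; first by rewrite normr0 expr0n mulr_ge0 ?ip_ge0.
have c2_gt0 : 0 < `|c| ^+ 2 by rewrite exprn_gt0 ?normr_gt0.
suff : (`|c| ^+ 2) ^+ 2 <= ip u u z * (`|c| ^+ 2 * ip v v z).
  by rewrite [X in _ <= X]mulrCA expr2 ler_pM2l.
apply: quadratic_discriminant_le => [||t t_ge0].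
- by rewrite mulr_ge0 ?ip_ge0 ?exprn_ge0.
- exact: exprn_ge0.
- have expand : ip (u - t *: (c *: v)) (u - t *: (c *: v)) z
      = ip u u z + t ^+ 2 * (`|c| ^+ 2 * ip v v z) - 2 * t * `|c| ^+ 2.
    rewrite ipDl !ipDr -!scaleNr !ipZl !ipZr !rmorphN (conj_nneg t_ge0).
    by rewrite (ip_conj u v) -/c -(mul_conj c); ring.
  by have := ip_ge0 (u - t *: (c *: v)); rewrite expand subr_ge0.
Qed.

Variable sqrtK : K -> K.
Hypotheses (sqrtK_ge0 : forall a, 0 <= a -> 0 <= sqrtK a)
  (sqrtK_sqr : forall a, 0 <= a -> sqrtK a ^+ 2 = a).

Lemma bessel_type_ineq_2inner n x (y : 'I_n -> X) : bessel_type_ineq sqrtK ip x y z.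
Proof.
rewrite /bessel_type_ineq /two_norm sqrtK_sqr ?ip_ge0 //.
set S := \sum_(i < n) `|ip x (y i) z| ^+ 2; set M := \big[Num.max/0]_(i < n) _.
set Q := \sum_(i < n) \sum_(j < n | i != j) _; set q := sqrtK Q.
have S_ge0 : 0 <= S by apply: sumr_ge0 => i _; apply: exprn_ge0.
have M_ge0 : 0 <= M by apply: bigmax_nneg_ge0 => i; rewrite sqrtK_sqr ip_ge0.
have Q_ge0 : 0 <= Q by do 2![apply: sumr_ge0 => ? _]; apply: exprn_ge0.
pose w := \sum_(i < n) ip x (y i) z *: y i.
have ip_x_w : ip x w z = S.
  by rewrite ip_sumr; apply: eq_bigr => i _; rewrite ipZr mulrC mul_conj.
have ip_w_w : ip w w z
    = \sum_i \sum_j ip x (y i) z * cj (ip x (y j) z) * ip (y i) (y j) z.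
  rewrite ip_suml; apply: eq_bigr => i _; rewrite ipZl ip_sumr mulr_sumr.
  by apply: eq_bigr => j _; rewrite ipZr mulrA.
have ip_w_w_le : ip w w z <= S * (M + q).
  rewrite -(ger0_norm (ip_ge0 w)) ip_w_w.
  apply: le_trans (ler_norm_sum _ _ _) _.
  apply: le_trans (ler_sum _ (fun i _ => ler_norm_sum _ _ _)) _.
  under eq_bigr => i _ do under eq_bigr => j _ do rewrite !normrM norm_conj.
  apply: ler_quadratic_form => // [i||]; last by rewrite sqrtK_sqr.
  - rewrite ger0_norm ?ip_ge0 // -(sqrtK_sqr (ip_ge0 (y i))).
    by apply: le_bigmax_nneg (mem_index_enum _) => j; rewrite sqrtK_sqr ip_ge0.
  - exact: sqrtK_ge0.
have [->|S_neq0] := eqVneq S 0; first by rewrite mulr_ge0 ?addr_ge0 ?ip_ge0 ?sqrtK_ge0.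
have S_gt0 : 0 < S by rewrite lt_def S_neq0.
rewrite -(ler_pM2l S_gt0) -expr2 mulrCA.
have := ip_CauchySchwarz x w; rewrite ip_x_w ger0_norm // => /le_trans; apply.
by rewrite ler_wpM2l ?ip_ge0.
Qed.

End TwoInnerProduct.

Theorem mainTheorem1 (R : realType) :
  (* K = R *)
  (forall (X : lmodType R) (ip : X -> X -> X -> R),
      is_2inner_product id ip ->
      forall (n : nat), (0 < n)%N ->
      forall (x : X) (y : 'I_n -> X) (z : X),
        bessel_type_ineq Num.sqrt ip x y z) /\
  (* K = C = R[i] *)
  (forall (X : lmodType R[i]) (ip : X -> X -> X -> R[i]),
      is_2inner_product Num.conj ip ->
      forall (n : nat), (0 < n)%N ->
      forall (x : X) (y : 'I_n -> X) (z : X),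
        bessel_type_ineq sqrtC ip x y z).
Proof.
split=> X ip ip2 n _ x y z.
- apply: (bessel_type_ineq_2inner (cj := idfun) _ ip2) => [a|a _|a a_ge0].
  + by rewrite real_normK ?num_real.
  + exact: sqrtr_ge0.
  + exact: sqr_sqrtr.
- apply: (bessel_type_ineq_2inner (cj := Num.conj) _ ip2) => [a|a a_ge0|a _].
  + by rewrite normCK.
  + by rewrite sqrtC_ge0.
  + exact: sqrtCK.
Qed.
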